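(* Let $n>2$ and $1<k<n$. In $H_B(n,k)$ the eccentricity of a vertex $v$ is $e(v)=3$ if $v\in V_1$; $e(v)=2$ if $v\in V_2$ is an $n$-vertex; and $e(v)=4$ if $v\in V_2$ is an $r$-vertex with $1\le r<n$.
   Context: Fix integers $n\ge 2$ and $1\le k<n$ and positive real numbers $x_1<x_2<\dots<x_n$. Let $\mathscr{B}_n=\{\pm x_1,\pm x_2,\dots,\pm x_{n-1},x_n\}$ (so $-x_n\notin\mathscr{B}_n$). Let $\phi(\mathscr{B}_n)$ be the family of all nonempty subsets $S\subseteq\mathscr{B}_n$ whose elements have pairwise distinct absolute values and whose element of largest absolute value is positive. Let $\mathscr{B}_n^+=\{x_1,\dots,x_n\}$, let $V_1$ be the set of all $k$-element subsets of $\mathscr{B}_n^+$, and let $V_2=\phi(\mathscr{B}_n)\setminus V_1$. For $A\in\phi(\mathscr{B}_n)$ put $A^\dagger=\{|a|:a\in A\}$. The bipartite Kneser B type-$k$ graph $H_B(n,k)$ is the simple graph with vertex set $V_1\cup V_2$ in which $X\in V_1$ and $Y\in V_2$ are adjacent if and only if $X\subseteq Y^\dagger$ or $Y^\dagger\subseteq X$, and there are no other edges. An $r$-vertex is a vertex having exactly $r$ elements. The eccentricity $e(v)$ is the maximum distance from $v$ to any vertex. *)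

From mathcomp Require Import all_boot.
Set Implicit Arguments. Unset Strict Implicit. Unset Printing Implicit Defensive.

(* Signed elements of B_n: (i, true) encodes +x_(i+1), (i, false) encodes -x_(i+1),
   for i : 'I_n.  Since 0 < x_1 < ... < x_n, |(i,s)| is determined by i and the
   order of absolute values is the order of indices. *)
Definition selt (n : nat) := ('I_n * bool)%type.

(* B_n = {±x_1,...,±x_{n-1}, x_n}: excludes -x_n *)
Definition inBn (n : nat) (p : selt n) : bool := p.2 || (val p.1 != n.-1).

(* phi(B_n): nonempty subsets of B_n, pairwise distinct absolute values,
   element of largest absolute value positive *)
Definition inPhi (n : nat) (S : {set selt n}) : bool :=
  [&& S \subset [set p | inBn p], S != set0,
      [forall p in S, forall q in S, (p.1 == q.1) ==> (p == q)] &
      [forall p in S, [forall q in S, val q.1 <= val p.1] ==> p.2]].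

Definition inV1 (n k : nat) (S : {set selt n}) : bool :=
  (S \subset [set p | p.2]) && (#|S| == k).

Definition inV2 (n k : nat) (S : {set selt n}) : bool :=
  inPhi S && ~~ inV1 k S.

Definition dagger (n : nat) (S : {set selt n}) : {set selt n} :=
  [set (p.1, true) | p in S].

Definition isVertex (n k : nat) (S : {set selt n}) : bool := inV1 k S || inV2 k S.

Definition HBedge0 (n k : nat) (X Y : {set selt n}) : bool :=
  [&& inV1 k X, inV2 k Y & (X \subset dagger Y) || (dagger Y \subset X)].

Definition HBadj (n k : nat) : rel {set selt n} :=
  fun X Y => HBedge0 k X Y || HBedge0 k Y X.

Definition walk (n k : nat) (u v : {set selt n}) (m : nat) : Prop :=
  exists s : seq {set selt n}, [/\ size s = m, path (@HBadj n k) u s & last u s = v].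

Definition dist (n k : nat) (u v : {set selt n}) (d : nat) : Prop :=
  walk k u v d /\ forall m, walk k u v m -> d <= m.

Definition ecc (n k : nat) (v : {set selt n}) (e : nat) : Prop :=
  (forall w, isVertex k w -> exists2 d, d <= e & walk k v w d) /\
  (exists w, isVertex k w /\ dist k v w e).

From mathcomp Require Import all_boot zify.
Set Implicit Arguments. Unset Strict Implicit.

(* [Bpos n] = B_n^+ lies in V2 and is adjacent to all of V1, and every V2 vertex has a
   V1 neighbour; so every vertex is within distance 2 of [Bpos n], and likewise of any
   n-vertex, which has the same neighbours.  This gives the upper bounds.  The graph is
   bipartite, so parity settles half of the lower bounds.  The others come from explicit
   far vertices: for v in V1, a singleton {x_i} with x_i not in v; for an r-vertex v, a
   vertex W of V2 whose absolute values form the complement of those of v, since a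
   k-subset of B_n^+ cannot be nested with both a nonempty proper part of B_n^+ and its
   complement.  Such a W exists even when that complement has exactly k elements:
   negate one of them that is not of largest absolute value. *)

Definition nested (T : finType) (A B : {set T}) := (A \subset B) || (B \subset A).

Lemma exists_subset_card (T : finType) (A B : {set T}) m :
  A \subset B -> #|A| <= m <= #|B| ->
  exists X : {set T}, [/\ A \subset X, X \subset B & #|X| = m].
Proof.
move=> AB /andP [Am mB]; rewrite -(subnKC Am) in mB *.
elim: (m - #|A|) mB => [|d IH] dB; first by exists A; rewrite addn0.
rewrite addnS in dB *; have [X [AX XB cX]] := IH (ltnW dB).
have /card_gt0P [x] : 0 < #|B :\: X| by rewrite cardsD (setIidPr XB) subn_gt0 cX.
rewrite inE => /andP [xX xB]; exists (x |: X); split.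
- exact: subset_trans AX (subsetUr _ _).
- by rewrite subUset sub1set xB.
- by rewrite cardsU1 xX cX.
Qed.

Lemma exists_nested_card (T : finType) (P D : {set T}) m :
  D \subset P -> m <= #|P| ->
  exists X : {set T}, [/\ X \subset P, #|X| = m & nested X D].
Proof.
move=> DP mP; have [mD | Dm] := leqP m #|D|.
  have [X [_ XD cX]] := @exists_subset_card _ set0 D m (sub0set _) ltac:(by rewrite cards0 mD).
  by exists X; rewrite /nested XD (subset_trans XD DP).
have [X [DX XP cX]] := @exists_subset_card _ D P m DP ltac:(by rewrite (ltnW Dm) mP).
by exists X; rewrite /nested DX orbT.
Qed.

Lemma nested_setD_contra (T : finType) (P A a : {set T}) :
  0 < #|A| -> 0 < #|P :\: A| -> 0 < #|a| -> ~~ (P \subset a) ->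
  ~~ (nested a A && nested a (P :\: A)).
Proof.
move=> /card_gt0P [x xA] /card_gt0P [y yPA] /card_gt0P [z za] Pa.
apply/negP => /andP [/orP [aA|Aa] /orP [aPA|PAa]].
- by move: (subsetP aPA z za); rewrite inE (subsetP aA z za).
- by move: (yPA); rewrite inE (subsetP aA y (subsetP PAa y yPA)).
- by move: (subsetP aPA x (subsetP Aa x xA)); rewrite inE xA.
- move/negP: Pa; apply; apply/subsetP => t tP; have [tA|tA] := boolP (t \in A).
    exact: (subsetP Aa).
  by apply: (subsetP PAa); rewrite inE tA.
Qed.

Definition Bpos n : {set selt n} := [set p | p.2].

Lemma card_Bpos n : #|Bpos n| = n.
Proof.
have -> : Bpos n = [set (i, true) | i : 'I_n].
  apply/setP => -[i b]; rewrite !inE; apply/idP/imsetP => [/= -> | [j _ [_ ->]]] //.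
  by exists i.
by rewrite card_imset ?card_ord // => i j [].
Qed.

Lemma Bpos_eta n (x : selt n) : x \in Bpos n -> x = (x.1, true).
Proof. by case: x => i b; rewrite inE /= => ->. Qed.

Lemma dagger_sub n (S : {set selt n}) : dagger S \subset Bpos n.
Proof. by apply/subsetP => x /imsetP [p _ ->]; rewrite inE. Qed.

Lemma dagger_pos n (S : {set selt n}) : S \subset Bpos n -> dagger S = S.
Proof.
move=> /subsetP SP; apply/setP => x; apply/imsetP/idP => [[p pS ->]|xS].
  by rewrite -(Bpos_eta (SP p pS)).
by exists x; rewrite -?(Bpos_eta (SP x xS)).
Qed.

Lemma card_dagger n (S : {set selt n}) : inPhi S -> #|dagger S| = #|S|.
Proof.
case/and4P => _ _ /forallP injS _; rewrite card_in_imset // => p q pS qS [e].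
by have /forallP/(_ q) := implyP (injS p) pS; rewrite qS e eqxx => /eqP.
Qed.

Lemma inPhi_pos n (S : {set selt n}) : S \subset Bpos n -> S != set0 -> inPhi S.
Proof.
move=> /subsetP SP S0; apply/and4P; split => //.
- by apply/subsetP => x /SP; rewrite !inE /inBn => ->.
- apply/'forall_implyP => p pS; apply/'forall_implyP => q qS; apply/implyP => /eqP e.
  by rewrite (Bpos_eta (SP p pS)) (Bpos_eta (SP q qS)) e.
- by apply/'forall_implyP => p /SP; rewrite inE => ->; rewrite implybT.
Qed.

Lemma exists_signed_lt n (B : {set selt n}) p q :
  B \subset Bpos n -> p \in B -> q \in B -> val p.1 < val q.1 ->
  exists W : {set selt n}, [/\ inPhi W, ~~ (W \subset Bpos n) & dagger W = B].
Proof.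
move=> /subsetP BP pB qB lt_pq; set W := (p.1, false) |: (B :\ p).
have BE x : x \in B :\ p -> x = (x.1, true) by case/setD1P => _ /BP/Bpos_eta.
exists W; split.
- apply/and4P; split.
  + apply/subsetP => x /setU1P [-> | /BE ->]; rewrite inE /inBn //=.
    by apply/eqP; move: lt_pq (ltn_ord q.1) => /=; lia.
  + by apply/set0Pn; exists (p.1, false); rewrite !inE eqxx.
  + apply/'forall_implyP => x xW; apply/'forall_implyP => y yW; apply/implyP => /eqP e.
    have pE := Bpos_eta (BP p pB).
    move: xW yW => /setU1P [xE|/[dup] xB /BE xE] /setU1P [yE|/[dup] yB /BE yE].
    * by rewrite xE yE.
    * by move: yB; rewrite yE -e xE /= -pE !inE eqxx.
    * by move: xB; rewrite xE e yE /= -pE !inE eqxx.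
    * by rewrite xE yE e.
  + apply/'forall_implyP => x /setU1P [-> /=|/BE -> /=]; last by rewrite implybT.
    have qW : q \in W.
      by rewrite !inE qB (_ : q != p) ?orbT //; apply: contraTneq lt_pq => ->; rewrite ltnn.
    by apply/negP => /forall_inP/(_ q qW); rewrite leqNgt lt_pq.
- by apply/subsetPn; exists (p.1, false); rewrite !inE ?eqxx.
- rewrite /dagger imsetU1 /= -(Bpos_eta (BP p pB)) -/(dagger _) dagger_pos ?setD1K //.
  by apply/subsetP => x /BE ->; rewrite inE.
Qed.

Lemma exists_signed n (B : {set selt n}) : B \subset Bpos n -> 1 < #|B| ->
  exists W : {set selt n}, [/\ inPhi W, ~~ (W \subset Bpos n) & dagger W = B].
Proof.
move=> BP /card_gt1P [p [q [pB qB pq]]].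
have [lt_pq|lt_qp|e] := ltngtP (val p.1) (val q.1).
- exact: exists_signed_lt BP pB qB lt_pq.
- exact: exists_signed_lt BP qB pB lt_qp.
have /subsetP BP' := BP.
by move: pq; rewrite (Bpos_eta (BP' p pB)) (Bpos_eta (BP' q qB)) (val_inj e) eqxx.
Qed.

Lemma inV2_pos n k (S : {set selt n}) :
  S \subset Bpos n -> S != set0 -> #|S| != k -> inV2 k S.
Proof. by move=> SP S0 Sk; rewrite /inV2 inPhi_pos // /inV1 (negPf Sk) andbF. Qed.

Lemma exists_V2_dagger n k (B : {set selt n}) : 1 < k ->
  B \subset Bpos n -> 0 < #|B| -> exists2 W, inV2 k W & dagger W = B.
Proof.
rewrite card_gt0 => k_gt1 BP B0; have [Bk|Bk] := eqVneq #|B| k.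
  have [W [phW WP dW]] := exists_signed BP ltac:(by rewrite Bk).
  by exists W; rewrite // /inV2 phW /inV1 (negPf WP).
by exists B; [exact: inV2_pos | exact: dagger_pos].
Qed.

Lemma V1_sub n k (X : {set selt n}) : inV1 k X -> X \subset Bpos n.
Proof. by case/andP. Qed.

Lemma V1_card n k (X : {set selt n}) : inV1 k X -> #|X| = k.
Proof. by case/andP => _ /eqP. Qed.

Lemma V2_phi n k (S : {set selt n}) : inV2 k S -> inPhi S.
Proof. by case/andP. Qed.

Lemma V2_V1F n k (S : {set selt n}) : inV2 k S -> inV1 k S = false.
Proof. by case/andP => _ /negPf. Qed.

Lemma HBadjC n k : symmetric (@HBadj n k).
Proof. by move=> X Y; rewrite /HBadj orbC. Qed.

Lemma HBadj_V1 n k (X Y : {set selt n}) :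
  inV1 k X -> HBadj k X Y = inV2 k Y && nested X (dagger Y).
Proof. by move=> hX; rewrite /HBadj /HBedge0 /inV2 hX !andbF orbF. Qed.

Lemma HBadj_V1N n k (X Y : {set selt n}) : HBadj k X Y -> inV1 k Y = ~~ inV1 k X.
Proof. by case/orP => /and3P [-> /V2_V1F -> _]. Qed.

Lemma HBadj_full n k (X v : {set selt n}) :
  inV1 k X -> inV2 k v -> dagger v = Bpos n -> HBadj k X v.
Proof. by move=> hX hv dv; rewrite HBadj_V1 // hv dv /nested (V1_sub hX). Qed.

Lemma walk_adj n k (u v : {set selt n}) : HBadj k u v -> walk k u v 1.
Proof. by move=> uv; exists [:: v]; rewrite /= uv. Qed.

Lemma walk_cat n k (u v w : {set selt n}) a b :
  walk k u v a -> walk k v w b -> walk k u w (a + b).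
Proof.
case=> s [<- us <-] [t [<- vt <-]]; exists (s ++ t).
by rewrite size_cat cat_path last_cat us vt.
Qed.

Lemma walk0_eq n k (u v : {set selt n}) : walk k u v 0 -> u = v.
Proof. by case=> [[|a s]] []. Qed.

Lemma walk1_adj n k (u v : {set selt n}) : walk k u v 1 -> HBadj k u v.
Proof. by case=> [[|a [|b s]]] [] //= _ /andP [uv _] <-. Qed.

Lemma walk2_mid n k (u v : {set selt n}) : walk k u v 2 ->
  exists2 a, HBadj k u a & HBadj k a v.
Proof. by case=> [[|a [|b [|c s]]]] [] //= _ /and3P [ua av _] <-; exists a. Qed.

Lemma walk_parity n k (u v : {set selt n}) m :
  walk k u v m -> inV1 k v = inV1 k u (+) odd m.
Proof.
case=> s [<- + <-]; elim: s u => [|a s IH] u /=; first by rewrite addbF.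
by case/andP => /HBadj_V1N ua /IH ->; rewrite ua addNb addbN.
Qed.

Lemma ecc_of_bounds n k (v w : {set selt n}) e :
  (forall x, isVertex k x -> exists2 d, d <= e & walk k v x d) ->
  isVertex k w -> (forall m, m < e -> ~ walk k v w m) -> ecc k v e.
Proof.
move=> ub hw lb; split=> //; exists w; split=> //.
have [d de vw] := ub w hw; have de' : d = e.
  by apply/eqP; rewrite eqn_leq de leqNgt; apply/negP => /lb.
subst d; split=> // m vwm; rewrite leqNgt; apply/negP => me; exact: lb me vwm.
Qed.

Section Eccentricity.

Variables n k : nat.
Hypotheses (k_gt1 : 1 < k) (k_lt_n : k < n).

Lemma Bpos_V2 : inV2 k (Bpos n).
Proof.
apply: inV2_pos => //; rewrite -?card_gt0 card_Bpos ?(gtn_eqF k_lt_n) //.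
exact: leq_ltn_trans k_lt_n.
Qed.

Lemma dagger_Bpos : dagger (Bpos n) = Bpos n.
Proof. exact: dagger_pos. Qed.

Lemma exists_V1_nbr (Z : {set selt n}) : inV2 k Z -> exists2 X, inV1 k X & HBadj k X Z.
Proof.
move=> hZ; have [X [XP cX ZX]] := @exists_nested_card _ _ _ k (dagger_sub Z)
  ltac:(by rewrite card_Bpos ltnW).
have hX : inV1 k X by rewrite /inV1 XP cX eqxx.
by exists X; rewrite // HBadj_V1 // hZ.
Qed.

Lemma walk_from_full (v : {set selt n}) : inV2 k v -> dagger v = Bpos n ->
  forall w, isVertex k w -> exists2 d, d <= 2 & walk k v w d.
Proof.
move=> hv dv w /orP [hw|hw].
  by exists 1 => //; apply: walk_adj; rewrite HBadjC HBadj_full.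
have [X hX Xw] := exists_V1_nbr hw.
exists 2 => //; apply: (@walk_cat _ _ v X w 1 1); apply: walk_adj => //.
by rewrite HBadjC HBadj_full.
Qed.

Lemma ecc_V1 (v : {set selt n}) : inV1 k v -> ecc k v 3.
Proof.
move=> hv; have vP : walk k v (Bpos n) 1.
  by apply/walk_adj/HBadj_full; rewrite ?dagger_Bpos ?Bpos_V2.
have /card_gt0P [p] : 0 < #|Bpos n :\: v|.
  by rewrite cardsD (setIidPr (V1_sub hv)) card_Bpos (V1_card hv) subn_gt0.
rewrite inE => /andP [pv]; rewrite -sub1set => pP.
have [W hW dW] := exists_V2_dagger k_gt1 pP ltac:(by rewrite cards1).
apply: (ecc_of_bounds (w := W)).
- move=> w /(walk_from_full Bpos_V2 dagger_Bpos) [d d2 Pw].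
  by exists (1 + d); [rewrite ltnS | exact: walk_cat vP Pw].
- by rewrite /isVertex hW orbT.
- move=> [|[|[|m]]] // _ hm; try by have := walk_parity hm; rewrite hv V2_V1F.
  move/walk1_adj: hm; rewrite HBadj_V1 // hW dW /nested sub1set (negPf pv) orbF.
  by move/subset_leq_card; rewrite cards1 (V1_card hv) leqNgt k_gt1.
Qed.

Lemma ecc_V2_full (v : {set selt n}) : inV2 k v -> #|v| = n -> ecc k v 2.
Proof.
move=> hv vn; have dv : dagger v = Bpos n.
  by apply/eqP; rewrite eqEcard dagger_sub card_Bpos card_dagger ?vn ?leqnn ?(V2_phi hv).
have /card_gt0P [p] : 0 < #|Bpos n| by rewrite card_Bpos; apply: leq_ltn_trans k_lt_n.
rewrite -sub1set => pP.
have [W hW dW] := exists_V2_dagger k_gt1 pP ltac:(by rewrite cards1).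
apply: (ecc_of_bounds (walk_from_full hv dv) (w := W)); first by rewrite /isVertex hW orbT.
move=> [|[|m]] // _ hm; last by have := walk_parity hm; rewrite !V2_V1F.
move: vn; rewrite (walk0_eq hm) -(card_dagger (V2_phi hW)) dW cards1; lia.
Qed.

Lemma ecc_V2_small (v : {set selt n}) : inV2 k v -> #|v| < n -> ecc k v 4.
Proof.
move=> hv vn; have [X hX Xv] := exists_V1_nbr hv.
have vP : walk k v (Bpos n) 2.
  apply: (@walk_cat _ _ v X _ 1 1); apply: walk_adj; first by rewrite HBadjC.
  by rewrite HBadj_full ?dagger_Bpos ?Bpos_V2.
have phv := V2_phi hv.
have dv0 : 0 < #|dagger v| by rewrite card_dagger // card_gt0; case/and4P: phv.
have C0 : 0 < #|Bpos n :\: dagger v|.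
  by rewrite cardsD (setIidPr (dagger_sub v)) card_Bpos card_dagger // subn_gt0.
have [W hW dW] := exists_V2_dagger k_gt1 (subsetDl _ _) C0.
apply: (ecc_of_bounds (w := W)).
- move=> w /(walk_from_full Bpos_V2 dagger_Bpos) [d d2 Pw].
  by exists (2 + d); [rewrite leq_add2l | exact: walk_cat vP Pw].
- by rewrite /isVertex hW orbT.
move=> [|[|[|[|m]]]] // _ hm; try by have := walk_parity hm; rewrite !V2_V1F.
- case/card_gt0P: dv0 => x xv.
  by move: (xv); rewrite (walk0_eq hm) dW inE xv.
- have [a va aW] := walk2_mid hm.
  have ha : inV1 k a by rewrite (HBadj_V1N va) V2_V1F.
  move: va aW; rewrite HBadjC !HBadj_V1 // hv hW dW /= => va aW.
  have a0 : 0 < #|a| by rewrite (V1_card ha) ltnW.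
  have Pa : ~~ (Bpos n \subset a).
    by apply/negP => /subset_leq_card; rewrite card_Bpos (V1_card ha) leqNgt k_lt_n.
  by move/negP: (nested_setD_contra dv0 C0 a0 Pa); rewrite va aW.
Qed.

End Eccentricity.

Theorem mainTheorem12 (n k : nat) :
  2 < n -> 1 < k < n ->
  forall v : {set selt n},
    (inV1 k v -> ecc k v 3) /\
    (inV2 k v -> #|v| = n -> ecc k v 2) /\
    (inV2 k v -> 1 <= #|v| < n -> ecc k v 4).
Proof.
(* [2 < n] follows from [1 < k < n]. *)
move=> _ /andP [k_gt1 k_lt_n] v; split; first exact: ecc_V1.
split; first exact: ecc_V2_full.
by move=> hv /andP [_ vn]; exact: ecc_V2_small.
Qed.
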